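(* With $n=2p+1$ agents and complete information, the RC mechanism with abstention subgame perfect implements the majority rule: for every preference profile $R$, every subgame-perfect equilibrium yields the outcome $Maj(R)$, and some subgame-perfect equilibrium yields $Maj(R)$.
   Context: Agents $I=\{1,\dots,n\}$, $n=2p+1$, options $A=\{a,b\}$, strict preferences over $A$, commonly known. Majority rule: $Maj(R)=a$ if at least $p+1$ agents prefer $a$, else $b$. Lotteries are compared by stochastic dominance (an agent preferring $x$ weakly (strictly) prefers $\beta$ to $\eta$ iff $\beta(x)\ge\eta(x)$ ($>$)). RC mechanism with abstention: Voting stage: each agent simultaneously chooses $v_i\in\{a,b,\mathrm{abs}\}$; the profile $v$ is publicly announced. If $a$ and $b$ receive equally many votes (including the case where everyone abstains), the outcome is the lottery giving probability $1/2$ to each option. Otherwise the option with more votes is the Voting-stage winner, and a Confirmation stage follows: $p+1$ agents are drawn uniformly at random from all agents and ordered uniformly, $\pi_1,\dots,\pi_{p+1}$; sequentially, as long as nobody has announced $Y$, agent $\pi_t$ announces $Y$, $N$, or abstains. If some agent announces $Y$, the outcome is the Voting-stage winner; if all announce $N$ or abstain, the outcome is the lottery $\beta(v)$ with $\beta_a(v)=|\{i:v_i=a\}|/(|\{i:v_i=a\}|+|\{i:v_i=b\}|)$, $\beta_b(v)=1-\beta_a(v)$. *)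

(* Lotteries over {a,b} are represented by the probability
   of option a (a rational number). *)
From HB Require Import structures.
From mathcomp Require Import all_boot all_order all_algebra.
Set Implicit Arguments. Unset Strict Implicit. Unset Printing Implicit Defensive.
Import Order.TTheory GRing.Theory Num.Theory.
Local Open Scope ring_scope.

Section RC.
Variable p : nat.

Definition agent := 'I_(p.*2.+1).

Definition vote := option bool.
Definition vA : vote := Some true.
Definition vB : vote := Some false.
Definition vAbs : vote := None.

Definition ann := option bool.
Definition annY : ann := Some true.
Definition annN : ann := Some false.
Definition annAbs : ann := None.

(* preference profile: R i = true iff agent i prefers a to b *)
Definition profile := agent -> bool.
Definition vprofile := agent -> vote.
(* an ordered draw pi_1..pi_{p+1} (uniform over injective tuples) *)
Definition draw := (p.+1).-tuple agent.

Definition nA (v : vprofile) : nat := #|[pred i | v i == vA]|.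
Definition nB (v : vprofile) : nat := #|[pred i | v i == vB]|.
Definition tie (v : vprofile) : bool := nA v == nB v.

(* probability of a under the Voting-stage winner (used when no tie) *)
Definition winner_prob (v : vprofile) : rat := if (nB v < nA v)%N then 1 else 0.
Definition beta_a (v : vprofile) : rat := (nA v)%:R / (nA v + nB v)%:R.

(* utility of a lottery (prob q of a) for agent i; stochastic dominance
   over {a,b} is exactly comparison of this quantity *)
Definition util (R : profile) (i : agent) (q : rat) : rat := if R i then q else 1 - q.

Definition maj_prob (R : profile) : rat :=
  if (p.+1 <= #|[pred i | R i]|)%N then 1 else 0.

(* confirmation-stage strategy: given the announced vote profile, the
   (publicly observed) draw, and the announcements made so far *)
Definition cstrat := vprofile -> draw -> seq ann -> ann.

Record strategy := Strategy {
  svote : agent -> vote;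
  sconf : agent -> cstrat }.

Fixpoint conf_run (sc : agent -> cstrat) (v : vprofile) (pi : draw) (k : nat)
    (h : seq ann) : rat :=
  match k with
  | 0 => beta_a v
  | k'.+1 =>
      let j := nth ord0 pi (size h) in
      let a := sc j v pi h in
      if a == annY then winner_prob v else conf_run sc v pi k' (rcons h a)
  end.

Definition conf_out (sc : agent -> cstrat) (v : vprofile) (pi : draw) (h : seq ann) : rat :=
  conf_run sc v pi (p.+1 - size h) h.

Definition conf_avg (sc : agent -> cstrat) (v : vprofile) : rat :=
  (\sum_(pi : draw | uniq pi) conf_out sc v pi [::])
    / (#|[pred pi : draw | uniq pi]|)%:R.

Definition outcome (s : strategy) : rat :=
  let v := svote s in if tie v then 1 / 2 else conf_avg (sconf s) v.

Definition dev_conf (sc : agent -> cstrat) (i : agent) (c : cstrat) : agent -> cstrat :=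
  fun j => if j == i then c else sc j.

Definition dev (s : strategy) (i : agent) (vi : vote) (c : cstrat) : strategy :=
  Strategy (fun j => if j == i then vi else svote s j) (dev_conf (sconf s) i c).

Definition SPE (R : profile) (s : strategy) : Prop :=
  (forall i vi c, util R i (outcome (dev s i vi c)) <= util R i (outcome s)) /\
  (forall v : vprofile, ~~ tie v -> forall i c,
      util R i (conf_avg (dev_conf (sconf s) i c) v) <= util R i (conf_avg (sconf s) v)) /\
  (forall (v : vprofile) (pi : draw) (h : seq ann),
      ~~ tie v -> uniq pi -> (size h <= p)%N -> all (fun a => a != annY) h ->
      forall i c,
      util R i (conf_out (dev_conf (sconf s) i c) v pi h) <= util R i (conf_out (sconf s) v pi h)).

End RC.

From mathcomp Require Import all_boot all_order all_algebra.
From mathcomp Require Import zify ring lra.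
From Stdlib Require Import FunctionalExtensionality.
Set Implicit Arguments. Unset Strict Implicit. Unset Printing Implicit Defensive.
Import Order.TTheory GRing.Theory Num.Theory.
Local Open Scope ring_scope.

(* In any subgame-perfect continuation of the confirmation stage the outcome is
   the Voting-stage winner as soon as one drawn agent prefers it (that agent can
   confirm), and beta(v) otherwise (the drawn agents, all opposed to the winner,
   can keep refusing).  At most p agents oppose the majority option m, so every
   draw of p+1 agents contains a supporter of m and a vote won by m yields m.
   If m does not win the vote, some supporter of m did not vote for m; when m
   loses, the probability of m is P(all drawn agents prefer m) * beta_m(v) < 1/2,
   and switching that vote to m makes m win, creates a tie, or raises beta_m
   while keeping the draw probability, so it strictly helps.  Hence every
   equilibrium yields m, and sincere voting followed by "confirm iff you prefer
   the winner" is an equilibrium. *)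

Section Mean.
Variables (K : realFieldType) (T : finType) (P : pred T).
Implicit Types (f g : T -> K) (c : K).

Definition mean f : K := (\sum_(x | P x) f x) / #|[pred x | P x]|%:R.

Lemma eq_mean f g : (forall x, P x -> f x = g x) -> mean f = mean g.
Proof. by move=> fg; rewrite /mean (eq_bigr g). Qed.

Lemma ler_mean f g : (forall x, P x -> f x <= g x) -> mean f <= mean g.
Proof. by move=> fg; rewrite /mean ler_wpM2r ?invr_ge0 ?ler0n // ler_sum. Qed.

Lemma meanMr f c : mean (fun x => f x * c) = mean f * c.
Proof. by rewrite /mean -mulr_suml mulrAC. Qed.

Lemma mean_gt0 f : (forall x, P x -> 0 <= f x) -> (exists2 x, P x & 0 < f x) -> 0 < mean f.
Proof.
move=> f_ge0 [x Px fx_gt0].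
have card_gt0 : 0 < #|[pred x | P x]|%:R :> K by rewrite ltr0n; apply/card_gt0P; exists x.
rewrite /mean divr_gt0 // (bigD1 x) //=; apply: ltr_pwDl => //.
by apply: sumr_ge0 => y /andP[Py _]; apply: f_ge0.
Qed.

Hypothesis P_nonempty : (0 < #|[pred x | P x]|)%N.

Lemma mean_const c : mean (fun=> c) = c.
Proof.
rewrite /mean (eq_bigl (fun x => x \in [pred x | P x])) // sumr_const -[c *+ _]mulr_natr.
by rewrite mulfK // pnatr_eq0 -lt0n.
Qed.

Lemma meanBl c f : mean (fun x => c - f x) = c - mean f.
Proof. by rewrite /mean sumrB mulrBl -/(mean (fun=> c)) mean_const. Qed.

End Mean.

Lemma exists_uniq_tuple (T : finType) (A : pred T) n :
  (n <= #|A|)%N -> exists t : n.-tuple T, uniq t && all A t.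
Proof.
move=> le_n_A; have size_t : size (take n (enum A)) == n by rewrite size_takel // -cardE.
exists (Tuple size_t); rewrite take_uniq ?enum_uniq //=.
by apply/allP => x /mem_take; rewrite mem_enum.
Qed.

Lemma uniq_tuple_has (T : finType) (A : pred T) n (t : n.-tuple T) :
  uniq t -> (#|[pred x | ~~ A x]| < n)%N -> has A t.
Proof.
move=> t_uniq small_compl; apply/negPn/negP; rewrite -all_predC => /allP notA.
have : (#|t| <= #|[pred x | ~~ A x]|)%N by apply/subset_leq_card/subsetP => x /notA.
by rewrite (card_uniqP t_uniq) size_tuple leqNgt small_compl.
Qed.

Lemma ltr_frac_succ (K : realFieldType) (a b b' : nat) : (b' <= b)%N -> (0 < b)%N ->
  a%:R / (a + b)%:R < a.+1%:R / (a.+1 + b')%:R :> K.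
Proof.
move=> le_b'b b_gt0.
have den_gt0 : 0 < (a + b)%:R :> K by rewrite ltr0n addn_gt0 b_gt0 orbT.
rewrite ltr_pdivrMr // mulrAC ltr_pdivlMr ?ltr0n // -!natrM ltr_nat; nia.
Qed.

Definition prob_of (x : bool) (q : rat) : rat := if x then q else 1 - q.

Lemma utilE p (R : profile p) i q : util R i q = prob_of (R i) q.
Proof. by []. Qed.

Lemma prob_ofN x q : prob_of (~~ x) q = 1 - prob_of x q.
Proof. by case: x => /=; ring. Qed.

Lemma prob_of_01 x q : 0 <= q <= 1 -> 0 <= prob_of x q <= 1.
Proof. by case: x => //= /andP[? ?]; apply/andP; split; lra. Qed.

Lemma prob_of_eq1 x q : prob_of x q = 1 -> q = if x then 1 else 0.
Proof. by case: x => //=; lra. Qed.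

Lemma prob_of_half x : prob_of x (1 / 2) = 1 / 2.
Proof. by case: x => /=; lra. Qed.

Lemma mean_prob_of (T : finType) (P : pred T) (f : T -> rat) x :
  (0 < #|[pred y | P y]|)%N -> prob_of x (mean P f) = mean P (fun y => prob_of x (f y)).
Proof. by case: x => //= P_nonempty; rewrite meanBl. Qed.

Section Votes.
Variable p : nat.
Implicit Types (v : vprofile p) (x : bool).

Definition votes v x : nat := #|[pred i | v i == Some x]|.

Definition winner v : bool := (nB v < nA v)%N.

Definition set_vote v (i : agent p) (y : vote) : vprofile p :=
  fun j => if j == i then y else v j.

Lemma tieE v x : tie v = (votes v x == votes v (~~ x)).
Proof. by case: x; rewrite /tie // eq_sym. Qed.

Lemma winnerE v x : (votes v (~~ x) < votes v x)%N -> winner v = x.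
Proof. by rewrite /winner; case: x => //= lt_AB; apply/negbTE; rewrite -leqNgt ltnW. Qed.

Lemma votes_total v x : (votes v x + votes v (~~ x) <= p.*2.+1)%N.
Proof.
rewrite -[p.*2.+1]card_ord -(cardC [pred i | v i == Some x]) leq_add2l.
by apply/subset_leq_card/subsetP => j; rewrite !inE => /eqP ->; case: x.
Qed.

Lemma votes_set v i y z :
  (votes (set_vote v i y) z + (v i == Some z) = votes v z + (y == Some z))%N.
Proof.
rewrite /votes (cardD1 i) [in RHS](cardD1 i) !inE /set_vote eqxx.
rewrite [in LHS]addnC addnA [in RHS]addnAC; congr (_ + _)%N.
by apply: eq_card => j; rewrite !inE; case: eqP.
Qed.

Lemma prob_of_winner v : prob_of (winner v) (winner_prob v) = 1.
Proof. by rewrite /winner_prob -/(winner v); case: winner. Qed.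

Lemma prob_of_loser v : prob_of (~~ winner v) (winner_prob v) = 0.
Proof. by rewrite prob_ofN prob_of_winner subrr. Qed.

Lemma beta_a_01 v : 0 <= beta_a v <= 1.
Proof.
rewrite /beta_a; have [->|tot_neq0] := eqVneq (nA v + nB v)%N 0%N.
  by rewrite invr0 mulr0 lexx ler01.
by rewrite divr_ge0 //= ler_pdivrMr ?ltr0n ?lt0n // mul1r ler_nat leq_addr.
Qed.

Lemma prob_of_beta v x : (0 < votes v x + votes v (~~ x))%N ->
  prob_of x (beta_a v) = (votes v x)%:R / (votes v x + votes v (~~ x))%:R.
Proof.
case: x => //= tot_gt0.
change (1 - (nA v)%:R / (nA v + nB v)%:R = (nB v)%:R / (nB v + nA v)%:R :> rat).
have tot_neq0 : (nA v + nB v)%:R != 0 :> rat by rewrite pnatr_eq0 -lt0n addnC.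
by rewrite [(nB v + nA v)%N]addnC -{1}(divff tot_neq0) -mulrBl natrD addrAC subrr add0r.
Qed.

Lemma prob_of_beta_lt_half v x :
  (votes v x < votes v (~~ x))%N -> prob_of x (beta_a v) < 1 / 2.
Proof.
move=> lt_x; rewrite prob_of_beta; last by rewrite addn_gt0 (leq_ltn_trans _ lt_x) ?orbT.
have lt_R : (votes v x)%:R < (votes v (~~ x))%:R :> rat by rewrite ltr_nat.
rewrite ltr_pdivrMr ?ltr0n ?addn_gt0 ?(leq_ltn_trans _ lt_x) ?orbT // natrD; lra.
Qed.

End Votes.

Section ConfirmationRun.
Variable p : nat.
Implicit Types (v : vprofile p) (pi : draw p) (h : seq ann) (sc : agent p -> cstrat p).

Lemma conf_run_cases sc v pi k h :
  conf_run sc v pi k h = winner_prob v \/ conf_run sc v pi k h = beta_a v.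
Proof. by elim: k h => [|k IH] h /=; [right | case: ifP => _; [left | apply: IH]]. Qed.

Lemma conf_run_01 sc v pi k h : 0 <= conf_run sc v pi k h <= 1.
Proof.
have [->|->] := conf_run_cases sc v pi k h; last exact: beta_a_01.
by rewrite /winner_prob; case: ifP.
Qed.

Lemma conf_run_Y sc v pi k h u : (size h <= u < size h + k)%N ->
  (forall h', sc (nth ord0 pi u) v pi h' = annY) -> conf_run sc v pi k h = winner_prob v.
Proof.
elim: k h => [|k IH] h u_in sayY /=; first by lia.
case: ifP => // notY; have [u_eq|u_neq] := eqVneq u (size h).
  by rewrite -u_eq sayY eqxx in notY.
by apply: IH => //; rewrite size_rcons; move: u_neq => /eqP; lia.
Qed.

Lemma conf_run_N sc v pi k h :
  (forall u, (size h <= u < size h + k)%N -> forall h', sc (nth ord0 pi u) v pi h' != annY) ->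
  conf_run sc v pi k h = beta_a v.
Proof.
elim: k h => [|k IH] h noY //=; rewrite (negbTE (noY _ _ h)); last by lia.
by apply: IH => u u_in; apply: noY; rewrite size_rcons in u_in; lia.
Qed.

Lemma eq_conf_run sc1 sc2 v pi k h :
  (forall u, (size h <= u < size h + k)%N ->
    forall h', sc1 (nth ord0 pi u) v pi h' = sc2 (nth ord0 pi u) v pi h') ->
  conf_run sc1 v pi k h = conf_run sc2 v pi k h.
Proof.
elim: k h => [|k IH] h same //=; rewrite (same (size h) _ h); last by lia.
by case: ifP => // _; apply: IH => u u_in; apply: same; rewrite size_rcons in u_in; lia.
Qed.

Lemma conf_out_dev sc v pi h c : uniq pi -> (size h <= p)%N -> c v pi h != annY ->
  conf_out (dev_conf sc (nth ord0 pi (size h)) c) v pi h = conf_out sc v pi (rcons h (c v pi h)).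
Proof.
move=> pi_uniq h_small notY; rewrite /conf_out size_rcons subSS subSn //=.
rewrite /dev_conf eqxx (negbTE notY); apply: eq_conf_run => u u_in h'.
rewrite size_rcons in u_in.
suff /negbTE -> : nth ord0 pi u != nth ord0 pi (size h) by [].
by rewrite nth_uniq ?size_tuple; lia.
Qed.

Lemma conf_avgE sc v :
  conf_avg sc v = mean (fun pi : draw p => uniq pi) (fun pi => conf_out sc v pi [::]).
Proof. by []. Qed.

Lemma uniq_draws_nonempty : (0 < #|[pred pi : draw p | uniq pi]|)%N.
Proof.
have [pi /andP[pi_uniq _]] : exists pi : draw p, uniq pi && all predT pi.
  by apply: exists_uniq_tuple; rewrite card_ord; lia.
by apply/card_gt0P; exists pi.
Qed.

Lemma conf_avg_01 sc v : 0 <= conf_avg sc v <= 1.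
Proof.
have mean_cst := mean_const uniq_draws_nonempty.
rewrite conf_avgE -{1}(mean_cst _ 0) -(mean_cst _ 1).
by rewrite !ler_mean // => pi _; case/andP: (conf_run_01 sc v pi (p.+1 - 0) [::]).
Qed.

Lemma outcome_01 (s : strategy p) : 0 <= outcome s <= 1.
Proof. by rewrite /outcome; case: ifP => _; [apply/andP; split; lra | exact: conf_avg_01]. Qed.

End ConfirmationRun.

Section Equilibrium.
Variables (p : nat) (R : profile p).
Implicit Types (v : vprofile p) (pi : draw p) (h : seq ann) (sc : agent p -> cstrat p).

Definition conf_equilibrium sc : Prop :=
  forall v pi h, ~~ tie v -> uniq pi -> (size h <= p)%N -> all (fun a => a != annY) h ->
  forall i c, util R i (conf_out (dev_conf sc i c) v pi h) <= util R i (conf_out sc v pi h).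

Definition conf_value v pi : rat :=
  if has (fun j => R j == winner v) pi then winner_prob v else beta_a v.

Lemma SPE_conf_equilibrium (s : strategy p) : SPE R s -> conf_equilibrium (sconf s).
Proof. by case=> _ []. Qed.

Lemma conf_equilibrium_avg sc : conf_equilibrium sc -> forall v, ~~ tie v ->
  forall i c, util R i (conf_avg (dev_conf sc i c) v) <= util R i (conf_avg sc v).
Proof.
move=> sc_eq v no_tie i c; rewrite !utilE !conf_avgE !mean_prob_of ?uniq_draws_nonempty //.
by apply: ler_mean => pi pi_uniq; apply: sc_eq.
Qed.

Section Characterization.
Variable sc : agent p -> cstrat p.
Hypothesis sc_eq : conf_equilibrium sc.

Lemma conf_out_ge_winner v pi j : ~~ tie v -> uniq pi -> j \in (pi : seq _) ->
  prob_of (R j) (winner_prob v) <= prob_of (R j) (conf_out sc v pi [::]).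
Proof.
move=> no_tie pi_uniq j_drawn.
have := @sc_eq v pi [::] no_tie pi_uniq (leq0n p) isT j (fun _ _ _ => annY).
suff -> : conf_out (dev_conf sc j (fun _ _ _ => annY)) v pi [::] = winner_prob v by [].
have j_pos : (index j pi < p.+1)%N by rewrite -[X in (_ < X)%N](size_tuple pi) index_mem.
apply: (conf_run_Y (u := index j pi)) => [|h']; first by rewrite /=; lia.
by rewrite nth_index // /dev_conf eqxx.
Qed.

Lemma conf_out_ge_beta v pi x : ~~ tie v -> uniq pi -> all (fun j => R j == x) pi ->
  forall h, (size h <= p)%N -> all (fun a => a != annY) h ->
  prob_of x (beta_a v) <= prob_of x (conf_out sc v pi h).
Proof.
move=> no_tie pi_uniq drawn_x.
have say_N h : (size h <= p)%N -> all (fun a => a != annY) h ->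
    prob_of x (conf_out sc v pi (rcons h annN)) <= prob_of x (conf_out sc v pi h).
  move=> h_small h_noY; set j := nth ord0 pi (size h).
  have <- : R j = x by apply/eqP/(allP drawn_x)/mem_nth; rewrite size_tuple.
  rewrite -(@conf_out_dev _ _ _ _ _ (fun _ _ _ => annN)) //.
  exact: @sc_eq v pi h no_tie pi_uniq h_small h_noY j _.
move=> h h_small; move d_eq : (p - size h)%N => d.
elim: d h h_small d_eq => [|d IH] h h_small d_eq h_noY; apply: le_trans (say_N h h_small h_noY).
  by rewrite /conf_out size_rcons subSS (_ : p - size h = 0)%N.
by apply: IH; rewrite ?size_rcons ?all_rcons ?h_noY //; lia.
Qed.

Lemma equilibrium_conf_out v pi : ~~ tie v -> uniq pi -> conf_out sc v pi [::] = conf_value v pi.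
Proof.
move=> no_tie pi_uniq; rewrite /conf_value /winner_prob -/(winner v).
have out_01 := conf_run_01 sc v pi (p.+1 - 0) [::].
case: ifP => [/hasP[j j_drawn /eqP Rj] | /negbT/hasPn no_supporter].
  have := conf_out_ge_winner no_tie pi_uniq j_drawn; rewrite Rj prob_of_winner => ge1.
  apply: prob_of_eq1; apply/eqP; rewrite eq_le ge1 andbT.
  by case/andP: (prob_of_01 (winner v) out_01).
have drawn_loser : all (fun j => R j == ~~ winner v) pi.
  by apply/allP => j /no_supporter; case: (R j); case: (winner v).
have := conf_out_ge_beta no_tie pi_uniq drawn_loser (h := [::]) (leq0n p) isT.
(* The run can end in [winner_prob v] only if [beta_a v] is already degenerate. *)
rewrite /conf_out; have [->|//] := conf_run_cases sc v pi (p.+1 - 0) [::].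
rewrite prob_of_loser prob_ofN subr_le0 => ge1.
apply: esym; apply: prob_of_eq1; apply/eqP; rewrite eq_le ge1 andbT.
by case/andP: (prob_of_01 (winner v) (beta_a_01 v)).
Qed.

Lemma equilibrium_conf_avg v : ~~ tie v ->
  conf_avg sc v = mean (fun pi : draw p => uniq pi) (conf_value v).
Proof. by move=> no_tie; rewrite conf_avgE; apply: eq_mean => pi; apply: equilibrium_conf_out. Qed.

End Characterization.
End Equilibrium.

Definition vote_outcome p (sc : agent p -> cstrat p) (v : vprofile p) : rat :=
  if tie v then 1 / 2 else conf_avg sc v.

Lemma outcomeE p (s : strategy p) : outcome s = vote_outcome (sconf s) (svote s).
Proof. by []. Qed.

Lemma dev_conf_id p (sc : agent p -> cstrat p) i : dev_conf sc i (sc i) = sc.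
Proof. by apply: functional_extensionality => j; rewrite /dev_conf; case: eqP => // ->. Qed.

Lemma outcome_dev_vote p (s : strategy p) i y :
  outcome (dev s i y (sconf s i)) = vote_outcome (sconf s) (set_vote (svote s) i y).
Proof. by rewrite /outcome /= dev_conf_id. Qed.

Section Majority.
Variables (p : nat) (R : profile p).

Definition maj : bool := (p.+1 <= #|[pred i | R i]|)%N.

Lemma card_pref x : (#|[pred j | R j == x]| + #|[pred j | R j != x]|)%N = p.*2.+1.
Proof. by rewrite (cardC [pred j | R j == x]) card_ord. Qed.

Lemma maj_supporters : (p < #|[pred j | R j == maj]|)%N.
Proof.
have card_true : #|[pred j | R j == true]| = #|[pred i | R i]|.
  by apply: eq_card => j; rewrite !inE eqb_id.
have card_false : #|[pred j | R j != false]| = #|[pred i | R i]|.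
  by apply: eq_card => j; rewrite !inE eqbF_neg negbK.
have := card_pref false; rewrite /maj; case: (leqP p.+1 #|[pred i | R i]|); lia.
Qed.

Lemma maj_opponents : (#|[pred j | R j != maj]| <= p)%N.
Proof. by have := card_pref maj; have := maj_supporters; lia. Qed.

Definition unanimous_prob x : rat :=
  mean (fun pi : draw p => uniq pi) (fun pi => (all (fun j => R j == x) pi)%:R).

Lemma unanimous_prob_gt0 x : (p < #|[pred j | R j == x]|)%N -> 0 < unanimous_prob x.
Proof.
move=> many_x; apply: mean_gt0 => [pi _|]; first by case: all.
have [pi /andP[pi_uniq all_x]] := exists_uniq_tuple many_x.
by exists pi; rewrite // all_x.
Qed.

Lemma unanimous_prob_le1 x : unanimous_prob x <= 1.
Proof.
rewrite -[1](mean_const (uniq_draws_nonempty p)); apply: ler_mean => pi _.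
by case: all.
Qed.

Section EquilibriumOutcome.
Variable sc : agent p -> cstrat p.
Hypothesis sc_eq : conf_equilibrium R sc.

Lemma vote_outcome_winner v x : (votes v (~~ x) < votes v x)%N ->
  (#|[pred j | R j != x]| <= p)%N -> prob_of x (vote_outcome sc v) = 1.
Proof.
move=> x_wins few_opp; have no_tie : ~~ tie v by rewrite (tieE v x) neq_ltn x_wins orbT.
rewrite /vote_outcome (negbTE no_tie) (equilibrium_conf_avg sc_eq no_tie).
rewrite (@eq_mean _ _ _ _ (fun=> winner_prob v)) => [|pi pi_uniq].
  by rewrite mean_const ?uniq_draws_nonempty // -(winnerE x_wins) prob_of_winner.
by rewrite /conf_value (winnerE x_wins) uniq_tuple_has.
Qed.

Lemma vote_outcome_loser v x : (votes v x < votes v (~~ x))%N ->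
  prob_of x (vote_outcome sc v) = unanimous_prob x * prob_of x (beta_a v).
Proof.
move=> x_loses; have no_tie : ~~ tie v by rewrite (tieE v x) neq_ltn x_loses.
have w_neg : winner v = ~~ x by apply: winnerE; rewrite negbK.
have x_winner_prob : prob_of x (winner_prob v) = 0 by rewrite -[x]negbK -w_neg prob_of_loser.
rewrite /vote_outcome (negbTE no_tie) (equilibrium_conf_avg sc_eq no_tie).
rewrite mean_prob_of ?uniq_draws_nonempty // /unanimous_prob -meanMr; apply: eq_mean => pi _.
rewrite /conf_value w_neg (@eq_has _ _ (predC (fun j => R j == x))); last first.
  by move=> j /=; case: (R j); case: (x).
by rewrite has_predC; case: all; rewrite ?mul1r ?mul0r.
Qed.

Lemma vote_outcome_loser_lt_half v : (votes v maj < votes v (~~ maj))%N ->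
  prob_of maj (vote_outcome sc v) < 1 / 2.
Proof.
move=> maj_loses; rewrite vote_outcome_loser //.
have := unanimous_prob_le1 maj; have := unanimous_prob_gt0 maj_supporters.
have := prob_of_beta_lt_half maj_loses.
have /andP[beta_ge0 _] := prob_of_01 maj (beta_a_01 v).
nra.
Qed.

Lemma vote_outcome_lt_set v i : (votes v maj <= votes v (~~ maj))%N -> v i != Some maj ->
  prob_of maj (vote_outcome sc v) < prob_of maj (vote_outcome sc (set_vote v i (Some maj))).
Proof.
move=> maj_not_win vi; set v' := set_vote v i (Some maj).
have votes_maj : votes v' maj = (votes v maj).+1.
  by have := votes_set v i (Some maj) maj; rewrite -/v' eqxx (negbTE vi); lia.
have votes_opp : (votes v' (~~ maj) <= votes v (~~ maj))%N.
  by have := votes_set v i (Some maj) (~~ maj); rewrite -/v'; case: (maj) => /=; lia.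
have le_half : prob_of maj (vote_outcome sc v) <= 1 / 2.
  move: maj_not_win; rewrite leq_eqVlt => /orP[/eqP no_tie | maj_loses].
    by rewrite /vote_outcome (tieE v maj) no_tie eqxx prob_of_half.
  exact/ltW/vote_outcome_loser_lt_half.
case: (ltngtP (votes v' (~~ maj)) (votes v' maj)) => [maj_wins'|maj_loses'|tie'].
- by rewrite (vote_outcome_winner maj_wins' maj_opponents); lra.
- have maj_loses : (votes v maj < votes v (~~ maj))%N by lia.
  rewrite !vote_outcome_loser // ltr_pM2l ?unanimous_prob_gt0 ?maj_supporters //.
  rewrite !prob_of_beta ?votes_maj; try lia.
  by apply: ltr_frac_succ; lia.
- have maj_loses : (votes v maj < votes v (~~ maj))%N by lia.
  rewrite {2}/vote_outcome (tieE v' maj) tie' eqxx prob_of_half.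
  exact: vote_outcome_loser_lt_half.
Qed.

End EquilibriumOutcome.

Lemma SPE_maj_outcome s : SPE R s -> prob_of maj (outcome s) = 1.
Proof.
move=> s_SPE; have conf_eq := SPE_conf_equilibrium s_SPE; set v := svote s.
have [maj_wins|maj_not_win] := ltnP (votes v (~~ maj)) (votes v maj).
  by rewrite outcomeE; apply: vote_outcome_winner maj_opponents.
have /subsetPn[i /eqP Ri vi] : ~~ ([pred j | R j == maj] \subset [pred j | v j == Some maj]).
  apply: contraTN maj_supporters => /subset_leq_card sup_le; rewrite -leqNgt.
  apply: leq_trans sup_le _; change (votes v maj <= p)%N.
  by have := votes_total v maj; lia.
have := s_SPE.1 i (Some maj) (sconf s i); rewrite outcome_dev_vote !utilE Ri leNgt.
by rewrite (vote_outcome_lt_set conf_eq maj_not_win vi).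
Qed.

End Majority.

Section Sincere.
Variables (p : nat) (R : profile p).

Definition sincere_conf : agent p -> cstrat p :=
  fun j v _ _ => if R j == winner v then annY else annN.

Definition sincere : strategy p := Strategy (fun j => Some (R j)) sincere_conf.

Lemma sincere_conf_equilibrium : conf_equilibrium R sincere_conf.
Proof.
move=> v pi h _ pi_uniq _ _ i c; rewrite !utilE /conf_out.
set k := (p.+1 - size h)%N; set w := winner v.
have [/hasP[u u_in /eqP Ru] | /hasPn no_supporter] :=
  boolP (has (fun u => R (nth ord0 pi u) == w) (iota (size h) k)).
  rewrite mem_iota in u_in.
  have say_Y sc : (forall h', sc (nth ord0 pi u) v pi h' = annY) ->
      conf_run sc v pi k h = winner_prob v by exact: conf_run_Y.
  have -> : conf_run sincere_conf v pi k h = winner_prob v.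
    by apply: say_Y => h'; rewrite /sincere_conf Ru eqxx.
  have [Ri|Ri] := eqVneq (R i) w.
    rewrite Ri prob_of_winner.
    by case/andP: (prob_of_01 w (conf_run_01 (dev_conf sincere_conf i c) v pi k h)).
  rewrite say_Y // => h'; rewrite /dev_conf; case: eqP => [u_i|_].
    by rewrite -u_i Ru eqxx in Ri.
  by rewrite /sincere_conf Ru eqxx.
have sincere_beta : conf_run sincere_conf v pi k h = beta_a v.
  apply: conf_run_N => u u_in h'; rewrite /sincere_conf.
  by case: ifP => // Ru; have := no_supporter u; rewrite mem_iota Ru => /(_ u_in).
rewrite sincere_beta.
have [/hasP[u u_in /eqP u_i] | /hasPn not_drawn] :=
  boolP (has (fun u => nth ord0 pi u == i) (iota (size h) k)).
  have Ri : R i = ~~ w by move: (no_supporter u u_in); rewrite u_i; case: (R i); case: (w).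
  have [->|->] := conf_run_cases (dev_conf sincere_conf i c) v pi k h; last by [].
  by rewrite Ri prob_of_loser; case/andP: (prob_of_01 (~~ w) (beta_a_01 v)).
suff -> : conf_run (dev_conf sincere_conf i c) v pi k h = beta_a v by [].
rewrite -sincere_beta; apply: eq_conf_run => u u_in h'.
rewrite /dev_conf; case: eqP => // u_i.
by have := not_drawn u; rewrite mem_iota u_in u_i eqxx => /(_ isT).
Qed.

Lemma sincere_votes x : votes (svote sincere) x = #|[pred j | R j == x]|.
Proof. by apply: eq_card => j; rewrite !inE. Qed.

Lemma sincere_maj_wins : (votes (svote sincere) (~~ maj R) < votes (svote sincere) (maj R))%N.
Proof.
rewrite !sincere_votes; apply: leq_ltn_trans (maj_supporters R).
apply: leq_trans (maj_opponents R); apply/subset_leq_card/subsetP => j.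
by rewrite !inE => /eqP ->; case: (maj R).
Qed.

Lemma sincere_outcome : prob_of (maj R) (outcome sincere) = 1.
Proof.
rewrite outcomeE.
by apply: (vote_outcome_winner sincere_conf_equilibrium sincere_maj_wins (maj_opponents R)).
Qed.

Lemma sincere_SPE : SPE R sincere.
Proof.
split; last split; last exact: sincere_conf_equilibrium.
  move=> i y c; rewrite !utilE.
  have [Ri|Ri] := eqVneq (R i) (maj R).
    rewrite Ri sincere_outcome.
    by case/andP: (prob_of_01 (maj R) (outcome_01 (dev sincere i y c))).
  have {}Ri : R i = ~~ maj R by move: Ri; case: (R i); case: (maj R).
  set v' := set_vote (svote sincere) i y.
  have maj_wins' : (votes v' (~~ maj R) < votes v' (maj R))%N.
    have := sincere_maj_wins; have := votes_set (svote sincere) i y (maj R).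
    have := votes_set (svote sincere) i y (~~ maj R); rewrite -/v' /= Ri eqxx.
    by case: (maj R) => /=; lia.
  have no_tie' : ~~ tie v' by rewrite (tieE v' (maj R)) neq_ltn maj_wins' orbT.
  have out' : prob_of (maj R) (conf_avg sincere_conf v') = 1.
    have := vote_outcome_winner sincere_conf_equilibrium maj_wins' (maj_opponents R).
    by rewrite /vote_outcome (negbTE no_tie').
  have -> : outcome (dev sincere i y c) = conf_avg (dev_conf sincere_conf i c) v'.
    by rewrite /outcome /= (negbTE no_tie').
  rewrite -utilE; apply: le_trans (conf_equilibrium_avg sincere_conf_equilibrium no_tie' i c) _.
  by rewrite utilE Ri !prob_ofN out' sincere_outcome.
exact: conf_equilibrium_avg sincere_conf_equilibrium.
Qed.

End Sincere.

Theorem proposition4 (p : nat) (R : profile p) :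
  (forall s : strategy p, SPE R s -> outcome s = maj_prob R) /\
  (exists s : strategy p, SPE R s /\ outcome s = maj_prob R).
Proof.
split=> [s s_SPE|]; first by rewrite (prob_of_eq1 (SPE_maj_outcome s_SPE)).
exists (sincere R); split; first exact: sincere_SPE.
by rewrite (prob_of_eq1 (sincere_outcome R)).
Qed.
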